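(* In the one-step setting below, $$\|y_{t+1}-q(x_{t+1})\|_2\le\eta\,\big\|\nabla\varepsilon_t^{\rm OGD}(q(x_{t+1}))-\nabla\varepsilon_t^{\rm OMD}(y_{t+1})\big\|_2.$$
   Context: One-step setting. $\mathcal X,\mathcal Y\subset\mathbb R^d$ convex compact, $q:\mathcal X\to\mathcal Y$ a smooth bijection with Jacobian $J_q$, $D_R(x\|y)=R(x)-R(y)-\nabla R(y)^\top(x-y)$, and: (A1) There is a twice continuously differentiable, strictly convex $R:\mathcal Y\to\mathbb R$ such that $[\nabla^2R(q(x))]^{-1}=J_q(x)J_q(x)^\top$ for all $x\in\mathcal X$. (A2) There is $G>1$ such that: $q$ is $G$-Lipschitz on $\mathcal X$; the first and second derivatives of $q^{-1}$ are bounded by $G$; $R$ is $1$-strongly convex (Euclidean norm) and smooth with first and third derivatives bounded by $G$; for every $z\in\mathcal Y$ the map $w\mapsto D_R(z\|w)$ is $G$-Lipschitz. Fix $\eta>0$, $x_t\in\mathcal X$, $y_t:=q(x_t)$, $g_t\in\mathbb R^d$ with $\|g_t\|\le\hat G_F$, $\tilde g_t:=J_q(x_t)^{-\top}g_t$, $\tilde G_F:=G\hat G_F$. Define $y_{t+1}=\arg\min_{y\in\mathcal Y}\{\tilde g_t^\top(y-y_t)+\frac1\eta D_R(y\|y_t)\}$ and $x_{t+1}=\arg\min_{x\in\mathcal X}\{g_t^\top(x-x_t)+\frac1{2\eta}\|x-x_t\|_2^2\}$. Let $\mathcal Y_t:=\mathcal Y\cap\{y:\|y-y_t\|_2\le 2\eta\tilde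 G_F\}$, $\|v\|_A:=\sqrt{v^\top Av}$, $\Phi_t(y):=\tilde g_t^\top(y-y_t)+\frac1{2\eta}\|y-y_t\|^2_{\nabla^2R(y_t)}$, $\varepsilon_t^{\rm OMD}(y):=\frac1\eta\big(D_R(y\|y_t)-\frac12\|y-y_t\|^2_{\nabla^2R(y_t)}\big)$, $\varepsilon^q_t(y):=q^{-1}(y)-q^{-1}(y_t)-J_q(x_t)^{-1}(y-y_t)$, and $\varepsilon_t^{\rm OGD}(y):=g_t^\top\varepsilon^q_t(y)+\frac1\eta\big(\frac12\|\varepsilon^q_t(y)\|_2^2+\langle J_q(x_t)^{-1}(y-y_t),\varepsilon^q_t(y)\rangle\big)$. It is known that $y_{t+1}=\arg\min_{y\in\mathcal Y_t}\{\Phi_t+\varepsilon_t^{\rm OMD}\}$ and $q(x_{t+1})=\arg\min_{y\in\mathcal Y_t}\{\Phi_t+\varepsilon_t^{\rm OGD}\}$. *)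

(* Vectors of R^d are row vectors 'rV[R]_d;
   matrices act on vectors in the usual column convention via [mv]. *)
From HB Require Import structures.
From mathcomp Require Import all_boot all_order all_algebra.
From mathcomp Require Import all_classical all_reals all_analysis.
Set Implicit Arguments. Unset Strict Implicit. Unset Printing Implicit Defensive.
Import Order.TTheory GRing.Theory Num.Theory.
Import numFieldNormedType.Exports.
Local Open Scope classical_set_scope.
Local Open Scope ring_scope.

Section Defs.
Variables (R : realType) (d : nat).
Notation V := 'rV[R]_d.

Definition dotv (u v : V) : R := \sum_(i < d) u 0 i * v 0 i.
Definition enorm (v : V) : R := Num.sqrt (dotv v v).

Definition mv (A : 'M[R]_d) (v : V) : V := v *m A^T.

Definition sqnormA (A : 'M[R]_d) (v : V) : R := dotv v (mv A v).

Definition evec (i : 'I_d) : V := delta_mx 0 i.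

Definition grad (f : V -> R) (x : V) : V := \row_i ('d f x (evec i)).

Definition Jac (f : V -> V) (x : V) : 'M[R]_d :=
  \matrix_(i, j) ('d f x (evec j)) 0 i.

Definition hess (f : V -> R) (x : V) : 'M[R]_d := Jac (grad f) x.

Definition iterD (W : normedModType R) (vs : seq V) (f : V -> W) : V -> W :=
  foldr (fun v g => 'D_v g) f vs.

Definition smooth_on (W : normedModType R) (A : set V) (f : V -> W) :=
  forall (vs : seq V) (x : V), A x -> differentiable (iterD vs f) x.

Definition C2_on (A : set V) (f : V -> R) :=
  forall x, A x ->
    [/\ differentiable f x,
        (forall v : V, differentiable ('D_v f) x) &
        (forall u v : V, {for x, continuous ('D_u ('D_v f))})].

Definition strictly_convex_on (A : set V) (f : V -> R) :=
  forall x y (t : R), A x -> A y -> x != y -> 0 < t < 1 ->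
    f (t *: x + (1 - t) *: y) < t * f x + (1 - t) * f y.

Definition strongly_convex_on (mu : R) (A : set V) (f : V -> R) :=
  forall x y (t : R), A x -> A y -> 0 <= t <= 1 ->
    f (t *: x + (1 - t) *: y) <=
      t * f x + (1 - t) * f y - mu / 2 * t * (1 - t) * enorm (x - y) ^+ 2.

Definition lipschitz_on_V (A : set V) (f : V -> V) (L : R) :=
  forall x y, A x -> A y -> enorm (f x - f y) <= L * enorm (x - y).

Definition lipschitz_on_R (A : set V) (f : V -> R) (L : R) :=
  forall x y, A x -> A y -> `|f x - f y| <= L * enorm (x - y).

Definition bregman (Rf : V -> R) (x y : V) : R :=
  Rf x - Rf y - dotv (grad Rf y) (x - y).

Definition is_argmin (A : set V) (f : V -> R) (z : V) :=
  A z /\ forall y, A y -> f z <= f y.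

Section OneStep.
Variables (q qinv : V -> V) (Rf : V -> R) (G eta : R) (xt gt : V) (GF : R).

Definition yt : V := q xt.
Definition Jq : V -> 'M[R]_d := Jac q.
Definition gtil : V := mv (invmx (Jq xt))^T gt.
Definition GFt : R := G * GF.
Definition Yt (Y : set V) : set V :=
  [set y | Y y /\ enorm (y - yt) <= 2 * eta * GFt].
Definition Phi (y : V) : R :=
  dotv gtil (y - yt) + 1 / (2 * eta) * sqnormA (hess Rf yt) (y - yt).
Definition epsOMD (y : V) : R :=
  1 / eta * (bregman Rf y yt - 1 / 2 * sqnormA (hess Rf yt) (y - yt)).
Definition epsq (y : V) : V :=
  qinv y - qinv yt - mv (invmx (Jq xt)) (y - yt).
Definition epsOGD (y : V) : R :=
  dotv gt (epsq y) +
  1 / eta * (1 / 2 * enorm (epsq y) ^+ 2 + dotv (mv (invmx (Jq xt)) (y - yt)) (epsq y)).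
(* objectives defining y_{t+1} and x_{t+1} *)
Definition omd_obj (y : V) : R := dotv gtil (y - yt) + 1 / eta * bregman Rf y yt.
Definition ogd_obj (x : V) : R :=
  dotv gt (x - xt) + 1 / (2 * eta) * enorm (x - xt) ^+ 2.
End OneStep.
End Defs.

(* Both y_{t+1} and q(x_{t+1}) minimise over the convex set Y_t the quadratic
   Phi_t plus a perturbation (eps^OMD, resp. eps^OGD).  Adding the two first-order
   optimality conditions, the quadratic parts contribute -(1/eta) u^T H u, where
   u = y_{t+1} - q(x_{t+1}) and H is the Hessian of R at y_t; hence
   u^T H u <= eta <w, u> with w = grad eps^OGD(q x_{t+1}) - grad eps^OMD(y_{t+1}).
   Differentiating the strong monotonicity of grad R (a consequence of 1-strong
   convexity) along segments through y_t gives |u|^2 <= u^T H u, and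
   |u|^2 <= eta <w, u> implies |u| <= eta |w| by expanding |eta w - u|^2 >= 0. *)

From HB Require Import structures.
From mathcomp Require Import all_boot all_order all_algebra.
From mathcomp Require Import all_classical all_reals all_analysis.
From mathcomp Require Import ring lra.
Set Implicit Arguments. Unset Strict Implicit. Unset Printing Implicit Defensive.
Import Order.TTheory GRing.Theory Num.Theory.
Import numFieldNormedType.Exports.
Local Open Scope classical_set_scope.
Local Open Scope ring_scope.

Section EuclideanGeometry.
Variables (R : realType) (d : nat).
Notation V := 'rV[R]_d.
Implicit Types (u v w : V).

Lemma dotvC u v : dotv u v = dotv v u.
Proof. by apply: eq_bigr => i _; rewrite mulrC. Qed.

Lemma dotvDl u v w : dotv (u + v) w = dotv u w + dotv v w.
Proof. by rewrite /dotv -big_split; apply: eq_bigr => i _; rewrite mxE mulrDl. Qed.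

Lemma dotvZl (k : R) u v : dotv (k *: u) v = k * dotv u v.
Proof. by rewrite /dotv mulr_sumr; apply: eq_bigr => i _; rewrite mxE mulrA. Qed.

Lemma dotvNl u v : dotv (- u) v = - dotv u v.
Proof. by rewrite -scaleN1r dotvZl mulN1r. Qed.

Lemma dotvBl u v w : dotv (u - v) w = dotv u w - dotv v w.
Proof. by rewrite dotvDl dotvNl. Qed.

Lemma dotvDr u v w : dotv u (v + w) = dotv u v + dotv u w.
Proof. by rewrite !(dotvC u) dotvDl. Qed.

Lemma dotvZr (k : R) u v : dotv u (k *: v) = k * dotv u v.
Proof. by rewrite !(dotvC u) dotvZl. Qed.

Lemma dotvNr u v : dotv u (- v) = - dotv u v.
Proof. by rewrite !(dotvC u) dotvNl. Qed.

Lemma dotv_subrC u v w : dotv u (v - w) = - dotv u (w - v).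
Proof. by rewrite -dotvNr opprB. Qed.

Lemma dotvv_ge0 v : 0 <= dotv v v.
Proof. by apply: sumr_ge0 => i _; rewrite -expr2 sqr_ge0. Qed.

Lemma enorm_ge0 v : 0 <= enorm v.
Proof. exact: sqrtr_ge0. Qed.

Lemma enorm_sqr v : enorm v ^+ 2 = dotv v v.
Proof. by rewrite /enorm sqr_sqrtr // dotvv_ge0. Qed.

Lemma enormZ_sqr (k : R) v : enorm (k *: v) ^+ 2 = k ^+ 2 * enorm v ^+ 2.
Proof. by rewrite !enorm_sqr dotvZl dotvZr mulrA expr2. Qed.

Lemma enormN v : enorm (- v) = enorm v.
Proof. by rewrite /enorm dotvNl dotvNr opprK. Qed.

Lemma enorm_dim0 v : d = 0%N -> enorm v = 0.
Proof.
move=> d0; rewrite /enorm /dotv big1 ?sqrtr0 // => -[i lt_id].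
by exfalso; rewrite d0 ltn0 in lt_id.
Qed.

Lemma mvD (M : 'M[R]_d) u v : mv M (u + v) = mv M u + mv M v.
Proof. exact: mulmxDl. Qed.

Lemma mvN (M : 'M[R]_d) v : mv M (- v) = - mv M v.
Proof. exact: mulNmx. Qed.

Lemma mvZ (M : 'M[R]_d) (k : R) v : mv M (k *: v) = k *: mv M v.
Proof. by rewrite /mv scalemxAl. Qed.

Lemma enorm_convex_comb_sqr u v (t : R) :
  enorm (t *: u + (1 - t) *: v) ^+ 2 =
    t * enorm u ^+ 2 + (1 - t) * enorm v ^+ 2 - t * (1 - t) * enorm (u - v) ^+ 2.
Proof.
rewrite !enorm_sqr !(dotvDl, dotvDr, dotvNl, dotvNr, dotvZl, dotvZr) (dotvC v u).
ring.
Qed.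

Lemma enorm_convex_comb_le u v (r t : R) : enorm u <= r -> enorm v <= r ->
  0 <= t <= 1 -> enorm (t *: u + (1 - t) *: v) <= r.
Proof.
move=> ur vr /andP[t0 t1].
have r0 : 0 <= r := le_trans (enorm_ge0 u) ur.
rewrite -(ler_pXn2r (isT : (0 < 2)%N)) ?nnegrE ?enorm_ge0 //.
rewrite enorm_convex_comb_sqr.
have t1' : 0 <= 1 - t by rewrite subr_ge0.
have sq_le (x : V) : enorm x <= r -> enorm x ^+ 2 <= r ^+ 2.
  by move=> xr; have := enorm_ge0 x; nra.
have := ler_wpM2l t0 (sq_le _ ur); have := ler_wpM2l t1' (sq_le _ vr).
have := mulr_ge0 (mulr_ge0 t0 t1') (sqr_ge0 (enorm (u - v))).
lra.
Qed.

Lemma enorm_le_of_sqr_le_dot u w (c : R) : 0 < c ->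
  enorm u ^+ 2 <= c * dotv w u -> enorm u <= c * enorm w.
Proof.
move=> c0 le_u.
have := dotvv_ge0 (c *: w - u).
rewrite !(dotvDl, dotvDr, dotvNl, dotvNr, dotvZl, dotvZr) (dotvC u w) -!enorm_sqr => sqr_ge0.
have cw0 : 0 <= c * enorm w by rewrite mulr_ge0 ?enorm_ge0 ?ltW.
rewrite -(ler_pXn2r (isT : (0 < 2)%N)) ?nnegrE ?enorm_ge0 // exprMn.
nra.
Qed.

End EuclideanGeometry.

Section ConvexSet.
Variables (R : realType) (d : nat).
Notation V := 'rV[R]_d.

Lemma convex_setP (A : set V) : convex_set A <->
  forall x y (t : R), A x -> A y -> 0 <= t <= 1 -> A (t *: x + (1 - t) *: y).
Proof.
split=> [cA x y t Ax Ay t01 | cA x y t].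
  have t_itv : Itv.spec (@Itv.num_sem R) (Itv.Real `[0%Z, 1%Z]) t.
    by move: t01 => /andP[t0 t1]; rewrite /Itv.spec /Itv.num_sem /= in_itv /= t0 t1 ger0_real.
  by have := cA x y (Itv.mk t_itv); rewrite !inE => /(_ Ax Ay).
by rewrite !inE => Ax Ay; apply: cA; rewrite ?ge0 ?le1.
Qed.

Lemma convex_set_segment (A : set V) x y (t : R) : convex_set A ->
  A x -> A y -> 0 <= t <= 1 -> A (t *: (y - x) + x).
Proof.
move=> /convex_setP cA Ax Ay t01.
have -> : t *: (y - x) + x = t *: y + (1 - t) *: x.
  by rewrite scalerBr scalerBl scale1r [RHS]addrCA [LHS]addrC.
exact: cA.
Qed.

End ConvexSet.

Section OneSidedLimits.
Variable R : realType.

Lemma cvg_at_right_ge_affine (f : R -> R) (l m k : R) : f @ 0^'+ --> l ->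
  (forall h, 0 < h <= 1 -> m + h * k <= f h) -> m <= l.
Proof.
move=> fl f_ge.
have mk : (fun h => m + h * k) @ 0^'+ --> m + 0 * k.
  apply: cvgD; first exact: cvg_cst.
  by apply: cvgMr_tmp; apply: cvg_at_right_filter; exact: cvg_id.
rewrite mul0r addr0 in mk.
apply: (ler_cvg_to mk fl); near=> h; apply: f_ge; apply/andP; split.
  by near: h; exact: nbhs_right_gt.
by near: h; apply: nbhs_right_le; exact: ltr01.
Unshelve. all: by end_near. Qed.

Lemma cvg_at_right_le_affine (f : R -> R) (l m k : R) : f @ 0^'+ --> l ->
  (forall h, 0 < h <= 1 -> f h <= m + h * k) -> l <= m.
Proof.
move=> fl f_le; rewrite -lerN2.
apply: (@cvg_at_right_ge_affine (fun h => - f h) _ _ (- k)); first exact: cvgN.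
by move=> h /f_le; rewrite -lerN2 opprD mulrN.
Qed.

Lemma derive_at_right (V W : normedModType R) (f : V -> W) a v : derivable f a v ->
  (fun h => h^-1 *: (f (h *: v + a) - f a)) @ 0^'+ --> 'D_v f a.
Proof.
have right_of_punctured (P : R -> Prop) :
    (\forall h \near 0^', P h) -> \forall h \near 0^'+, P h.
  by rewrite !near_withinE; apply: filterS => h Ph h_gt0; apply: Ph; rewrite gt_eqF.
by move=> df A /df; apply: right_of_punctured.
Qed.

End OneSidedLimits.

Section Differentials.
Variables (R : realType) (d : nat).
Notation V := 'rV[R]_d.
Implicit Types (u v w x : V).

Lemma linear_dotv (L : {linear V -> R}) v : L v = dotv (\row_i L (evec R i)) v.
Proof.
rewrite {1}(row_sum_delta v) linear_sum /dotv; apply: eq_bigr => i _.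
by rewrite linearZ mxE /= mulrC.
Qed.

Lemma diff_grad (f : V -> R) x v : 'd f x v = dotv (grad f x) v.
Proof. exact: linear_dotv. Qed.

Lemma mv_Jac (f : V -> V) x v : mv (Jac f x) v = 'd f x v.
Proof.
apply/rowP => i; rewrite /mv mxE {2}(row_sum_delta v) linear_sum summxE.
by apply: eq_bigr => j _; rewrite linearZ !mxE.
Qed.

Lemma sqnormA_hess (f : V -> R) x v :
  sqnormA (hess f x) v = dotv ('d (grad f) x v) v.
Proof. by rewrite /sqnormA /hess mv_Jac dotvC. Qed.

(* [diff] is defined by choice, and defaults to the zero map. *)
Lemma diff_not_differentiable (f : V -> V) x : ~ differentiable f x ->
  forall v, 'd f x v = 0.
Proof.
move=> ndf v; suff -> : 'd f x = point by [].
rewrite /diff; set P := (X in get X).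
apply: getPN => df Pdf; apply: ndf; apply/diffP.
exact: (getPex (ex_intro P df Pdf)).
Qed.

Lemma differentiable_grad_of_unit_hess (f : V -> R) x : (0 < d)%N ->
  hess f x \in unitmx -> differentiable (grad f) x.
Proof.
move=> d_gt0 unit_hess; apply: contrapT => ndgrad.
have hess0 : hess f x = 0.
  by apply/matrixP => i j; rewrite !mxE diff_not_differentiable // mxE.
move: unit_hess; rewrite hess0 => /mulmxV; rewrite mul0mx.
move=> /matrixP /(_ (Ordinal d_gt0) (Ordinal d_gt0)); rewrite !mxE eqxx /=.
by move=> /eqP; rewrite eq_sym oner_eq0.
Qed.

Lemma differentiable_coord_fun (f : V -> V) x i : differentiable f x ->
  differentiable (fun y => f y 0 i) x.
Proof.
move=> df; have -> : (fun y => f y 0 i) = (fun M : V => M 0 i) \o f by [].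
by apply: differentiable_comp => //; exact: differentiable_coord.
Qed.

Lemma differentiable_dotv (f g : V -> V) x : differentiable f x -> differentiable g x ->
  differentiable (fun y => dotv (f y) (g y)) x.
Proof.
move=> df dg.
have -> : (fun y => dotv (f y) (g y)) = \sum_(i < d) (fun y => f y 0 i * g y 0 i).
  by rewrite fct_sumE; apply/funext => y.
apply: differentiable_sum => i.
by apply: (@differentiableM _ _ (fun y => f y 0 i)); apply: differentiable_coord_fun.
Qed.

Lemma differentiable_mv (M : 'M[R]_d) (f : V -> V) x : differentiable f x ->
  differentiable (fun y => mv M (f y)) x.
Proof.
move=> df.
have -> : (fun y => mv M (f y)) = \sum_(j < d) (fun y => f y 0 j *: row j M^T).
  rewrite fct_sumE; apply/funext => y; apply/rowP => i.
  by rewrite /mv mxE summxE; apply: eq_bigr => j _; rewrite !mxE.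
apply: differentiable_sum => j.
by apply: (@differentiableZl _ _ _ (fun y => f y 0 j)); exact: differentiable_coord_fun.
Qed.

Lemma differentiable_subr c x : differentiable (fun y : V => y - c) x.
Proof.
by apply: differentiableB; [have [] := @is_diff_id _ _ x | exact: differentiable_cst].
Qed.

Lemma differentiable_mulr (k : R) (f : V -> R) x : differentiable f x ->
  differentiable (fun y => k * f y) x.
Proof. exact: (@differentiableM _ _ (cst k)). Qed.

Lemma differentiable_enorm_sqr (f : V -> V) x : differentiable f x ->
  differentiable (fun y => enorm (f y) ^+ 2) x.
Proof.
move=> df; have -> : (fun y => enorm (f y) ^+ 2) = (fun y => dotv (f y) (f y)).
  by apply/funext => y; rewrite enorm_sqr.
exact: differentiable_dotv.
Qed.

Lemma cvg_dotvl (T : Type) (F : set_system T) (FF : Filter F) (f : T -> V) l w :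
  f @ F --> l -> (fun t => dotv (f t) w) @ F --> dotv l w.
Proof.
move=> fl; apply: (continuous_cvg _ _ (h := fun u : V => dotv u w)) => //.
exact/differentiable_continuous/differentiable_dotv.
Qed.

End Differentials.

Section DirectionalDerivatives.
Variables (R : realType) (d : nat).
Notation V := 'rV[R]_d.
Implicit Types (f : V -> R) (a v : V).

Lemma diff_ge_affine f a v (m k : R) : differentiable f a ->
  (forall h, 0 < h <= 1 -> m + h * k <= h^-1 * (f (h *: v + a) - f a)) ->
  m <= 'd f a v.
Proof.
move=> df f_ge; rewrite -deriveE //.
apply: (cvg_at_right_ge_affine (f := fun h => h^-1 * (f (h *: v + a) - f a)) _ f_ge).
exact: derive_at_right (diff_derivable df).
Qed.

Lemma diff_le_affine f a v (m k : R) : differentiable f a ->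
  (forall h, 0 < h <= 1 -> h^-1 * (f (h *: v + a) - f a) <= m + h * k) ->
  'd f a v <= m.
Proof.
move=> df f_le; rewrite -deriveE //.
apply: (cvg_at_right_le_affine (f := fun h => h^-1 * (f (h *: v + a) - f a)) _ f_le).
exact: derive_at_right (diff_derivable df).
Qed.

Lemma diff_ge0_at_min f a v : differentiable f a ->
  (forall h, 0 < h <= 1 -> f a <= f (h *: v + a)) -> 0 <= 'd f a v.
Proof.
move=> df f_min; apply: (@diff_ge_affine _ _ _ 0 0) => // h /andP[h_gt0 h_le1].
rewrite mulr0 addr0; apply: mulr_ge0; first by rewrite invr_ge0 ltW.
by rewrite subr_ge0 f_min // h_gt0.
Qed.

Lemma diff_of_quadratic_ray f a v (A B : R) : differentiable f a ->
  (forall h, 0 < h -> f (h *: v + a) - f a = h * A + h ^+ 2 * B) ->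
  'd f a v = A.
Proof.
move=> df f_ray.
have quot h : 0 < h <= 1 -> h^-1 * (f (h *: v + a) - f a) = A + h * B.
  move=> /andP[h_gt0 _]; rewrite f_ray // expr2 -mulrA -mulrDr mulKf //.
  exact: lt0r_neq0.
apply/eqP; rewrite eq_le (diff_le_affine (k := B)) ?(diff_ge_affine (k := B)) //.
  by move=> h /quot ->.
by move=> h /quot ->.
Qed.

Lemma argmin_diff_ge0 (A : set V) f a b : convex_set A -> is_argmin A f a ->
  A b -> differentiable f a -> 0 <= 'd f a (b - a).
Proof.
move=> cA [Aa a_min] Ab df; apply: diff_ge0_at_min => // h /andP[h_gt0 h_le1].
by apply: a_min; apply: convex_set_segment; rewrite ?(ltW h_gt0).
Qed.

End DirectionalDerivatives.

Definition quadratic (R : realType) (d : nat) (g c : 'rV[R]_d) (k : R) (M : 'M[R]_d)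
  (y : 'rV[R]_d) : R := dotv g (y - c) + k * sqnormA M (y - c).

Section QuadraticFunctions.
Variables (R : realType) (d : nat).
Notation V := 'rV[R]_d.
Variables (g c : V) (k : R) (M : 'M[R]_d).
Notation Q := (quadratic g c k M).

Lemma differentiable_quadratic (y : V) : differentiable Q y.
Proof.
have dsub := differentiable_subr c y.
apply: differentiableD; first exact: differentiable_dotv (differentiable_cst _ _) dsub.
exact/differentiable_mulr/differentiable_dotv/differentiable_mv.
Qed.

Lemma diff_quadratic (y v : V) :
  'd Q y v = dotv g v + k * (dotv v (mv M (y - c)) + dotv (y - c) (mv M v)).
Proof.
apply: (diff_of_quadratic_ray (B := k * sqnormA M v)) => [|h _].
  exact: differentiable_quadratic.
rewrite /quadratic /sqnormA.
have -> : h *: v + y - c = (y - c) + h *: v by rewrite [h *: v + y]addrC addrAC.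
set w := y - c.
rewrite mvD mvZ !(dotvDl, dotvDr, dotvZl, dotvZr); ring.
Qed.

Lemma diff_quadratic_antisym (a b : V) :
  'd Q a (b - a) + 'd Q b (a - b) = - (2 * k) * sqnormA M (b - a).
Proof.
rewrite [X in X + _]diff_quadratic [X in _ + X]diff_quadratic /sqnormA.
have -> : b - c = (a - c) + (b - a) by rewrite [RHS]addrC addrA subrK.
rewrite -[a - b]opprB; set u := b - a; set w := a - c; clearbody u w.
rewrite !(mvD, mvN, dotvDl, dotvDr, dotvNl, dotvNr); ring.
Qed.

End QuadraticFunctions.

Lemma strongly_monotone_diff_ge (R : realType) (d : nat) (G : 'rV[R]_d -> 'rV[R]_d)
    (y0 a b : 'rV[R]_d) :
  differentiable G y0 ->
  (forall h, 0 < h <= 1 ->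
     enorm (h *: a + y0 - (h *: b + y0)) ^+ 2 <=
     dotv (G (h *: a + y0) - G (h *: b + y0)) (h *: a + y0 - (h *: b + y0))) ->
  enorm (a - b) ^+ 2 <= dotv ('d G y0 (a - b)) (a - b).
Proof.
move=> dG G_mono.
pose quot h := h^-1 * dotv (G (h *: a + y0) - G (h *: b + y0)) (a - b).
have quot_cvg : quot @ 0^'+ --> dotv ('d G y0 (a - b)) (a - b).
  have -> : quot = fun h => dotv (h^-1 *: (G (h *: a + y0) - G y0)
                                  - h^-1 *: (G (h *: b + y0) - G y0)) (a - b).
    by apply/funext => h; rewrite -scalerBr opprB addrA subrK dotvZl.
  apply: cvg_dotvl; rewrite linearB; apply: cvgB; rewrite -deriveE //;
    exact: derive_at_right (diff_derivable dG).
apply: (cvg_at_right_ge_affine (k := 0) quot_cvg) => h h01.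
have h_gt0 : 0 < h by case/andP: h01.
have := G_mono h h01.
rewrite (_ : h *: a + y0 - (h *: b + y0) = h *: (a - b)); last first.
  by rewrite opprD addrACA subrr addr0 scalerBr.
rewrite enormZ_sqr dotvZr expr2 -mulrA ler_pM2l // => le_quot.
by rewrite mulr0 addr0 ler_pdivlMl.
Qed.

Section StrongConvexity.
Variables (R : realType) (d : nat).
Notation V := 'rV[R]_d.
Variables (Y : set V) (f : V -> R).
Hypothesis f_sc : strongly_convex_on 1 Y f.

Lemma strongly_convex_diff_le (p p' : V) : Y p -> Y p' -> differentiable f p' ->
  'd f p' (p - p') <= f p - f p' - 1 / 2 * enorm (p - p') ^+ 2.
Proof.
move=> Yp Yp' df; set N := enorm (p - p') ^+ 2.
apply: (diff_le_affine (k := 1 / 2 * N)) => // h /andP[h_gt0 h_le1].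
have h01 : 0 <= h <= 1 by rewrite (ltW h_gt0) h_le1.
have := f_sc Yp Yp' h01.
have -> : h *: p + (1 - h) *: p' = h *: (p - p') + p'.
  by rewrite scalerBr scalerBl scale1r addrCA [RHS]addrC.
rewrite -/N ler_pdivrMl // => f_le.
have -> : h * (f p - f p' - 1 / 2 * N + h * (1 / 2 * N)) =
  h * f p + (1 - h) * f p' - 1 / 2 * h * (1 - h) * N - f p' by ring.
by rewrite lerBlDr subrK.
Qed.

Lemma strongly_convex_grad_monotone (p p' : V) : Y p -> Y p' ->
  differentiable f p -> differentiable f p' ->
  enorm (p - p') ^+ 2 <= dotv (grad f p - grad f p') (p - p').
Proof.
move=> Yp Yp' dfp dfp'.
have sum_le (N G G' a b : R) :
    G' <= a - b - 1 / 2 * N -> - G <= b - a - 1 / 2 * N -> N <= G - G' by lra.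
have le_p := strongly_convex_diff_le Yp Yp' dfp'.
have le_p' := strongly_convex_diff_le Yp' Yp dfp.
rewrite diff_grad in le_p; rewrite diff_grad -[p' - p]opprB dotvNr enormN in le_p'.
by rewrite [dotv _ (p - p')]dotvBl; apply: sum_le le_p le_p'.
Qed.

Lemma strongly_convex_hess_ge (y0 p p' : V) : convex_set Y ->
  (forall y, Y y -> differentiable f y) -> differentiable (grad f) y0 ->
  Y y0 -> Y p -> Y p' -> enorm (p - p') ^+ 2 <= sqnormA (hess f y0) (p - p').
Proof.
move=> cY df dgrad Yy0 Yp Yp'.
have Y_seg h x : 0 < h <= 1 -> Y x -> Y (h *: (x - y0) + y0).
  by move=> /andP[h_gt0 h_le1] Yx; apply: convex_set_segment; rewrite ?(ltW h_gt0).
have -> : p - p' = (p - y0) - (p' - y0) by rewrite opprB addrA subrK.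
rewrite sqnormA_hess.
apply: strongly_monotone_diff_ge => // h h01.
have [Ya Yb] := (Y_seg h p h01 Yp, Y_seg h p' h01 Yp').
exact: strongly_convex_grad_monotone Ya Yb (df _ Ya) (df _ Yb).
Qed.

End StrongConvexity.

Section PerturbedQuadraticArgmin.
Variables (R : realType) (d : nat).
Notation V := 'rV[R]_d.

Lemma argmin_quadratic_perturbation (A : set V) (g c : V) (eta : R) (M : 'M[R]_d)
    (e1 e2 : V -> R) (y1 y2 : V) :
  convex_set A -> 0 < eta -> enorm (y1 - y2) ^+ 2 <= sqnormA M (y1 - y2) ->
  differentiable e1 y1 -> differentiable e2 y2 ->
  is_argmin A (fun y => quadratic g c (1 / (2 * eta)) M y + e1 y) y1 ->
  is_argmin A (fun y => quadratic g c (1 / (2 * eta)) M y + e2 y) y2 ->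
  enorm (y1 - y2) <= eta * enorm (grad e2 y2 - grad e1 y1).
Proof.
(* The two first-order conditions at [y1] and [y2], added up: the quadratic
   parts contribute [- eta^-1 * S]. *)
have key (a1 a2 E1 E2 S N : R) : 0 < eta ->
    0 <= a1 - E1 -> 0 <= a2 + E2 -> a2 + a1 = - eta^-1 * S -> N <= S ->
    eta^-1 * N <= E2 - E1.
  move=> eta_gt0 ge1 ge2 sum_a NS.
  have inv_ge0 : 0 <= eta^-1 by rewrite invr_ge0 ltW.
  have := ler_wpM2l inv_ge0 NS; lra.
move=> cA eta_gt0 M_ge de1 de2 am1 am2.
have antisym := diff_quadratic_antisym g c (1 / (2 * eta)) M y2 y1.
rewrite (_ : 2 * (1 / (2 * eta)) = eta^-1) in antisym; last first.
  by rewrite mul1r invfM mulrA mulfV ?mul1r // pnatr_eq0.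
set Q := quadratic g c (1 / (2 * eta)) M in am1 am2 antisym.
have dQ y : differentiable Q y by exact: differentiable_quadratic.
have foc1 : 0 <= 'd (Q + e1) y1 (y2 - y1).
  exact: argmin_diff_ge0 cA am1 am2.1 (differentiableD (dQ y1) de1).
have foc2 : 0 <= 'd (Q + e2) y2 (y1 - y2).
  exact: argmin_diff_ge0 cA am2 am1.1 (differentiableD (dQ y2) de2).
rewrite (diffD (dQ y1) de1) /= (diff_grad e1) dotv_subrC in foc1.
rewrite (diffD (dQ y2) de2) /= (diff_grad e2) in foc2.
apply: enorm_le_of_sqr_le_dot => //.
rewrite -ler_pdivrMl // [dotv (grad e2 y2 - _) _]dotvBl.
exact: key eta_gt0 foc1 foc2 antisym M_ge.
Qed.

End PerturbedQuadraticArgmin.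

Section OneStep.
Variables (R : realType) (d : nat).
Notation V := 'rV[R]_d.
Variables (q qinv : V -> V) (Rf : V -> R) (G eta GF : R) (xt gt : V).

Lemma convex_set_Yt (Y : set V) : convex_set Y -> convex_set (Yt q G eta xt GF Y).
Proof.
move=> /convex_setP cY; apply/convex_setP => x y t [Yx x_near] [Yy y_near] t01.
split; first exact: cY.
have -> : t *: x + (1 - t) *: y - yt q xt =
          t *: (x - yt q xt) + (1 - t) *: (y - yt q xt).
  by rewrite !scalerBr addrACA -opprD -scalerDl [t + _]addrCA subrr addr0 scale1r.
exact: enorm_convex_comb_le.
Qed.

Lemma differentiable_epsOMD y : differentiable Rf y ->
  differentiable (epsOMD q Rf eta xt) y.
Proof.
move=> dRf; have dsub := differentiable_subr (yt q xt) y.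
apply: differentiable_mulr; apply: differentiableB.
  apply: differentiableB; first by apply: differentiableB => //; exact: differentiable_cst.
  exact: differentiable_dotv (differentiable_cst _ _) dsub.
exact/differentiable_mulr/differentiable_dotv/differentiable_mv.
Qed.

Lemma differentiable_epsq y : differentiable qinv y ->
  differentiable (epsq q qinv xt) y.
Proof.
move=> dqinv; apply: differentiableB; last exact/differentiable_mv/differentiable_subr.
by apply: differentiableB => //; exact: differentiable_cst.
Qed.

Lemma differentiable_epsOGD y : differentiable qinv y ->
  differentiable (epsOGD q qinv eta xt gt) y.
Proof.
move=> /differentiable_epsq deps; apply: differentiableD.
  exact: differentiable_dotv (differentiable_cst _ _) deps.
apply: differentiable_mulr; apply: differentiableD.
  by apply: differentiable_mulr; exact: differentiable_enorm_sqr.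
exact: differentiable_dotv (differentiable_mv _ (differentiable_subr _ _)) deps.
Qed.

End OneStep.

Theorem lemmaA4 (R : realType) (d : nat)
  (X Y : set 'rV[R]_d) (q qinv : 'rV[R]_d -> 'rV[R]_d) (Rf : 'rV[R]_d -> R)
  (G eta GF : R) (xt gt y1 x1 : 'rV[R]_d) :
  (* X, Y convex compact; q : X -> Y a smooth bijection with inverse qinv *)
  convex_set X -> convex_set Y -> compact X -> compact Y ->
  (forall x, X x -> Y (q x)) -> (forall y, Y y -> X (qinv y)) ->
  (forall x, X x -> qinv (q x) = x) -> (forall y, Y y -> q (qinv y) = y) ->
  smooth_on X q ->
  (* (A1) *)
  C2_on Y Rf -> strictly_convex_on Y Rf ->
  (forall x, X x ->
     hess Rf (q x) \in unitmx /\
     invmx (hess Rf (q x)) = Jq q x *m (Jq q x)^T) ->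
  (* (A2) *)
  1 < G ->
  lipschitz_on_V X q G ->
  (forall y, Y y -> differentiable qinv y /\
                    forall v, differentiable ('D_v qinv) y) ->
  (forall y u, Y y -> enorm ('D_u qinv y) <= G * enorm u) ->
  (forall y u v, Y y -> enorm ('D_u ('D_v qinv) y) <= G * enorm u * enorm v) ->
  strongly_convex_on 1 Y Rf -> smooth_on Y Rf ->
  (forall y u, Y y -> `|'D_u Rf y| <= G * enorm u) ->
  (forall y u v w, Y y ->
     `|'D_u ('D_v ('D_w Rf)) y| <= G * enorm u * enorm v * enorm w) ->
  (forall z, Y z -> lipschitz_on_R Y (fun w => bregman Rf z w) G) ->
  (* the one-step setting *)
  0 < eta -> X xt -> enorm gt <= GF ->
  is_argmin Y (omd_obj q Rf eta xt gt) y1 ->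
  is_argmin X (ogd_obj eta xt gt) x1 ->
  (* known facts *)
  is_argmin (Yt q G eta xt GF Y)
    (fun y => Phi q Rf eta xt gt y + epsOMD q Rf eta xt y) y1 ->
  is_argmin (Yt q G eta xt GF Y)
    (fun y => Phi q Rf eta xt gt y + epsOGD q qinv eta xt gt y) (q x1) ->
  (* conclusion *)
  enorm (y1 - q x1) <=
    eta * enorm (grad (epsOGD q qinv eta xt gt) (q x1)
                 - grad (epsOMD q Rf eta xt) y1).
Proof.
move=> _ cY _ _ qXY _ _ _ _ C2R _ A1 _ _ dqinv _ _ scR _ _ _ _ eta_gt0 Xxt _ _ _ am1 am2.
have [d0|d_gt0] := posnP d.
  by rewrite enorm_dim0 // mulr_ge0 ?enorm_ge0 // ltW.
have Yyt : Y (yt q xt) := qXY _ Xxt.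
have [[Yy1 _] _] := am1; have [[Yz _] _] := am2.
have dRf y : Y y -> differentiable Rf y by move=> /C2R [].
have dgrad : differentiable (grad Rf) (yt q xt).
  exact: differentiable_grad_of_unit_hess d_gt0 (A1 _ Xxt).1.
apply: argmin_quadratic_perturbation am1 am2.
- exact: convex_set_Yt.
- exact: eta_gt0.
- exact (strongly_convex_hess_ge scR cY dRf dgrad Yyt Yy1 Yz).
- by apply: differentiable_epsOMD; apply: dRf.
- by apply: differentiable_epsOGD; case: (dqinv _ Yz).
Qed.
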